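(* If $n\equiv 0$ or $n\equiv 1\pmod 4$, then $\mathcal{AM}_n$ is generated by $\mathcal{AO}_n\cup\{h\}$.
   Context: Let $n\geqslant 2$, $\Omega_n=\{1<2<\cdots<n\}$ and $\mathcal{I}_n$ the monoid of all partial injective maps of $\Omega_n$, composed left to right. $\mathcal{AI}_n$ is the set of all $\alpha\in\mathcal{I}_n$ with $\alpha=\sigma|_{\mathrm{Dom}(\alpha)}$ for some even permutation $\sigma$; $\mathcal{POI}_n$ (resp. $\mathcal{PMI}_n$) is the set of order-preserving (resp. order-preserving or order-reversing) elements; $\mathcal{AO}_n=\mathcal{AI}_n\cap\mathcal{POI}_n$, $\mathcal{AM}_n=\mathcal{AI}_n\cap\mathcal{PMI}_n$. $h$ is the permutation $i\mapsto n+1-i$ of $\Omega_n$ (which lies in $\mathcal{AM}_n$ when $n\equiv 0,1\pmod 4$). *)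

(* Omega_n = {1<...<n} is modelled by 'I_n = {0<...<n-1}
   (order-isomorphic via i |-> i+1). *)
From mathcomp Require Import all_boot all_order all_fingroup.
Set Implicit Arguments. Unset Strict Implicit. Unset Printing Implicit Defensive.

Definition ptrans (n : nat) := {ffun 'I_n -> option 'I_n}.

Definition pdom n (a : ptrans n) (x : 'I_n) : bool := a x != None.

Definition pinj n (a : ptrans n) : Prop :=
  forall x y z : 'I_n, a x = Some z -> a y = Some z -> x = y.

(* composition left to right: x (a * b) = (x a) b *)
Definition pcomp n (a b : ptrans n) : ptrans n := [ffun x => obind b (a x)].

Definition pid n : ptrans n := [ffun x => Some x].

Definition AI n (a : ptrans n) : Prop :=
  pinj a /\ exists s : 'S_n, ~~ odd_perm s /\ forall x y, a x = Some y -> y = s x.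

Definition order_preserving n (a : ptrans n) : Prop :=
  forall x y x' y' : 'I_n, a x = Some x' -> a y = Some y' -> (x <= y)%N -> (x' <= y')%N.

Definition order_reversing n (a : ptrans n) : Prop :=
  forall x y x' y' : 'I_n, a x = Some x' -> a y = Some y' -> (x <= y)%N -> (y' <= x')%N.

Definition POI n (a : ptrans n) : Prop := pinj a /\ order_preserving a.
Definition PMI n (a : ptrans n) : Prop := pinj a /\ (order_preserving a \/ order_reversing a).

Definition AO n (a : ptrans n) : Prop := AI a /\ POI a.
Definition AM n (a : ptrans n) : Prop := AI a /\ PMI a.

(* h : i |-> n+1-i, i.e. on 'I_n, i |-> n-1-i *)
Definition hmap n : ptrans n := [ffun x => Some (rev_ord x)].

Inductive gen_submonoid n (S : ptrans n -> Prop) : ptrans n -> Prop :=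
  | gen_id : gen_submonoid S (pid n)
  | gen_mul a b : S a -> gen_submonoid S b -> gen_submonoid S (pcomp a b).

(* Composition of partial maps is closed on AI_n, on partial injections and
   on monotone maps (with the sign rule for preserving/reversing), so the
   submonoid generated by AO_n and h lies in AM_n as soon as h is itself the
   restriction of an even permutation.  The reversal i |-> n-1-i is a product
   of n/2 disjoint transpositions, hence even exactly when n = 0, 1 (mod 4).
   Conversely an order-reversing a in AM_n factors as h (h a), where h a is
   order-preserving and still in AI_n. *)

From Pilot Require Import Defs.
From mathcomp Require Import all_boot all_order all_fingroup.
From mathcomp Require Import zify.
Set Implicit Arguments. Unset Strict Implicit. Unset Printing Implicit Defensive.

Section PartialMaps.

Variable n : nat.
Implicit Types (a b : ptrans n) (x y : 'I_n).

(* [Defs.] is needed: ssrfun's own [pcomp] shadows the one of Defs. *)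
Lemma pcompE a b x : Defs.pcomp a b x = obind b (a x).
Proof. by rewrite /Defs.pcomp ffunE. Qed.

Lemma pidE x : pid n x = Some x.
Proof. by rewrite ffunE. Qed.

Lemma hmapE x : hmap n x = Some (rev_ord x).
Proof. by rewrite ffunE. Qed.

Lemma pcomp_Some a b x z :
  Defs.pcomp a b x = Some z -> exists2 u, a x = Some u & b u = Some z.
Proof. by rewrite pcompE; case: (a x) => [u|] //= bu; exists u. Qed.

Lemma pcomp_pid a : Defs.pcomp a (pid n) = a.
Proof. by apply/ffunP => x; rewrite pcompE; case: (a x) => //= u; rewrite pidE. Qed.

Lemma pcomp_hmapK a : Defs.pcomp (hmap n) (Defs.pcomp (hmap n) a) = a.
Proof. by apply/ffunP => x; rewrite !pcompE !hmapE /= pcompE hmapE /= rev_ordK. Qed.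

Lemma pinj_pcomp a b : pinj a -> pinj b -> pinj (Defs.pcomp a b).
Proof.
move=> inj_a inj_b x y z /pcomp_Some[u ax bu] /pcomp_Some[v ay bv].
by move: ax; rewrite (inj_b _ _ _ bu bv) => ax; apply: inj_a ax ay.
Qed.

Lemma AI_pcomp a b : AI a -> AI b -> AI (Defs.pcomp a b).
Proof.
move=> [inj_a [s [even_s ext_s]]] [inj_b [t [even_t ext_t]]].
split; first exact: pinj_pcomp.
exists (s * t)%g; split; first by rewrite odd_permM (negbTE even_s) (negbTE even_t).
by move=> x z /pcomp_Some[u ax bu]; rewrite permM -(ext_s _ _ ax); apply: ext_t.
Qed.

Lemma pcomp_preserving_preserving a b :
  order_preserving a -> order_preserving b -> order_preserving (Defs.pcomp a b).
Proof.
move=> mon_a mon_b x y x' y' /pcomp_Some[u ax bu] /pcomp_Some[v ay bv] le_xy.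
exact: mon_b bu bv (mon_a _ _ _ _ ax ay le_xy).
Qed.

Lemma pcomp_preserving_reversing a b :
  order_preserving a -> order_reversing b -> order_reversing (Defs.pcomp a b).
Proof.
move=> mon_a mon_b x y x' y' /pcomp_Some[u ax bu] /pcomp_Some[v ay bv] le_xy.
exact: mon_b bu bv (mon_a _ _ _ _ ax ay le_xy).
Qed.

Lemma pcomp_reversing_preserving a b :
  order_reversing a -> order_preserving b -> order_reversing (Defs.pcomp a b).
Proof.
move=> mon_a mon_b x y x' y' /pcomp_Some[u ax bu] /pcomp_Some[v ay bv] le_xy.
exact: mon_b bv bu (mon_a _ _ _ _ ax ay le_xy).
Qed.

Lemma pcomp_reversing_reversing a b :
  order_reversing a -> order_reversing b -> order_preserving (Defs.pcomp a b).
Proof.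
move=> mon_a mon_b x y x' y' /pcomp_Some[u ax bu] /pcomp_Some[v ay bv] le_xy.
exact: mon_b bv bu (mon_a _ _ _ _ ax ay le_xy).
Qed.

Lemma PMI_pcomp a b : PMI a -> PMI b -> PMI (Defs.pcomp a b).
Proof.
move=> [inj_a [mon_a|mon_a]] [inj_b [mon_b|mon_b]]; split; try exact: pinj_pcomp.
- by left; apply: pcomp_preserving_preserving.
- by right; apply: pcomp_preserving_reversing.
- by right; apply: pcomp_reversing_preserving.
- by left; apply: pcomp_reversing_reversing.
Qed.

Lemma AM_pcomp a b : AM a -> AM b -> AM (Defs.pcomp a b).
Proof. by move=> [AIa PMIa] [AIb PMIb]; split; [apply: AI_pcomp | apply: PMI_pcomp]. Qed.

Lemma AM_pid : AM (pid n).
Proof.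
have inj_id : pinj (pid n) by move=> x y z; rewrite !pidE => -[->] [].
split; split=> //; last by left=> x y x' y'; rewrite !pidE => -[<-] [<-].
by exists 1%g; rewrite odd_perm1; split=> // x y; rewrite pidE perm1 => -[].
Qed.

Lemma AO_AM a : AO a -> AM a.
Proof. by move=> [AIa [inj_a mon_a]]; split=> //; split=> //; left. Qed.

Lemma pinj_hmap : pinj (hmap n).
Proof. by move=> x y z; rewrite !hmapE => -[<-] /Some_inj/rev_ord_inj. Qed.

Lemma hmap_reversing : order_reversing (hmap n).
Proof.
move=> x y x' y'; rewrite !hmapE => -[<-] [<-] /=.
by have := ltn_ord x; have := ltn_ord y; lia.
Qed.

Lemma partial_reversal_perm k : (k <= n./2)%N -> exists s : 'S_n,
  odd_perm s = odd k /\ forall x,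
    val (s x) = (if (x < k) || (n - k <= x) then n - x.+1 else x)%N.
Proof.
elim: k => [|k IHk] le_k.
  exists 1%g; split=> [|x]; first exact: odd_perm1.
  by rewrite perm1 /=; have := ltn_ord x; case: ifP => //; lia.
have [s [odd_s val_s]] := IHk (ltnW le_k).
have {}le_k : (k.+1 * 2 <= n)%N.
  by have := odd_double_half n; rewrite -muln2; move: le_k; lia.
have lt_k : (k < n)%N by lia.
have lt_nk : (n - k.+1 < n)%N by lia.
pose i := Ordinal lt_k; pose j := Ordinal lt_nk.
have neq_ij : i != j by apply/eqP => /(congr1 val) /=; lia.
exists (s * tperm i j)%g; split; first by rewrite odd_permM odd_s odd_tperm neq_ij addbT.
move=> x; rewrite permM; have := val_s x; have := ltn_ord x.
case: tpermP => [-> | -> | /eqP ne_i /eqP ne_j] /=.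
- by case: ifP; case: ifP; lia.
- by case: ifP; case: ifP; lia.
- by move: ne_i ne_j; rewrite -!val_eqE /=; case: ifP; case: ifP; lia.
Qed.

Lemma rev_ord_even_perm : (n %% 4 = 0 \/ n %% 4 = 1)%N ->
  exists s : 'S_n, ~~ odd_perm s /\ forall x, s x = rev_ord x.
Proof.
move=> n_mod4; have [s [odd_s val_s]] := partial_reversal_perm (leqnn n./2).
exists s; split; first by rewrite odd_s; case: n_mod4; lia.
move=> x; apply: val_inj; rewrite val_s /=.
by have := ltn_ord x; case: ifP => //; lia.
Qed.

Lemma AM_hmap : (n %% 4 = 0 \/ n %% 4 = 1)%N -> AM (hmap n).
Proof.
move=> /rev_ord_even_perm[s [even_s s_rev]].
split; split; try exact: pinj_hmap; last by right; apply: hmap_reversing.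
by exists s; split=> // x y; rewrite hmapE s_rev => -[].
Qed.

Lemma gen_submonoid_gen (S : ptrans n -> Prop) a : S a -> gen_submonoid S a.
Proof. by move=> Sa; rewrite -(pcomp_pid a); apply: gen_mul Sa (gen_id S). Qed.

Lemma gen_submonoid_sub (S P : ptrans n -> Prop) :
  P (pid n) -> (forall a b, P a -> P b -> P (Defs.pcomp a b)) ->
  (forall a, S a -> P a) -> forall a, gen_submonoid S a -> P a.
Proof. by move=> P1 PM SP a; elim=> // b c /SP Pb _; apply: PM. Qed.

End PartialMaps.

Theorem lemma5p1 (n : nat) : (2 <= n)%N -> (n %% 4 = 0 \/ n %% 4 = 1)%N ->
  forall a : ptrans n, AM a <-> gen_submonoid (fun b => AO b \/ b = hmap n) a.
Proof.
move=> _ n_mod4 a; split.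
- move=> [AIa [inj_a [mon_a|mon_a]]].
    by apply: gen_submonoid_gen; left.
  have [AIh [inj_h _]] := AM_hmap n_mod4.
  rewrite -(pcomp_hmapK a); apply: gen_mul; first by right.
  apply: gen_submonoid_gen; left; split; first exact: AI_pcomp.
  split; first exact: pinj_pcomp.
  exact: pcomp_reversing_reversing (@hmap_reversing n) mon_a.
- apply: gen_submonoid_sub; [exact: AM_pid | exact: AM_pcomp |].
  by move=> b [/AO_AM | ->] //; apply: AM_hmap.
Qed.
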